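(* Let $W$ be a periodic infinite word with a period of length $N$ (i.e. $W=uuu\cdots$ with $|u|=N$). Then every Rauzy scheme for $W$ has scale strictly less than $N$.
   Context: $u\sqsubseteq w$: $u$ is a factor of $w$; $u\sqsubseteq_k w$: $u$ occurs in $w$ at least $k$ times. A graph with words is a strongly connected finite directed graph (multiple edges and loops allowed) in which every edge $e$ carries a front word $F(e)$ and a back word $B(e)$, and every vertex either has in-degree $1$ and out-degree $>1$ (distributing vertex) or in-degree $>1$ and out-degree $1$ (collecting vertex). A path is a finite nonempty sequence of edges $v_1\dots v_n$ with each $v_{i+1}$ starting where $v_i$ ends; subpaths and $s_1\sqsubseteq_k s_2$ are defined via edge records. A path is symmetric if its first edge starts at a collecting vertex and its last edge ends at a distributing vertex. For $s=v_1\dots v_n$, $F(s)$ is the concatenation, in order, of the front words of $v_1$ and of all $v_i$ ($i\ge2$) starting at a distributing vertex; $B(s)$ is the concatenation, in order, of the back words of all $v_i$ ($i\le n-1$) ending at a collecting vertex and of $v_n$. A Rauzy scheme for $W$ is a graph with words such that: (1) it has more than one edge; (2) front words of edges leaving a common distributing vertex have pairwise distinct first letters, and back words of edges entering a common collecting vertex have pairwise distinct last letters; (3) $F(s)=B(s)$ for every symmetric path $s$; (4) for symmetric paths $s_1,s_2$ and $k\ge1$, $F(s_1)\sqsubseteq_k F(s_2)$ implies $s_1\sqsubseteq_k s_2$; (5) all words on edges are factors of $W$; (6) every factor of $W$ is a factor of $F(s)$ for some symmetric path $s$; (7) for every edge $e$ there is a factor $u_e$ of $W$ such that every symmetric path $s$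 with $u_e\sqsubseteq F(s)$ passes through $e$. A support edge is an edge from a collecting vertex to a distributing vertex; the scale of $S$ is the minimum of $|F(v)|$ over support edges $v$. *)

From mathcomp Require Import all_boot.
Set Implicit Arguments. Unset Strict Implicit. Unset Printing Implicit Defensive.

Definition occ (T : eqType) (u w : seq T) : nat :=
  count (fun i => (i + size u <= size w) && (take (size u) (drop i w) == u))
        (iota 0 (size w).+1).

Definition occurs_k (T : eqType) (k : nat) (u w : seq T) : Prop := k <= occ u w.

Definition factor (T : eqType) (u w : seq T) : Prop := 0 < occ u w.

Definition factor_inf (A : eqType) (u : seq A) (W : nat -> A) : Prop :=
  exists i, forall j, j < size u -> W (i + j) = nth (W 0) u j.

Definition periodic_with_period (A : Type) (W : nat -> A) (N : nat) : Prop :=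
  exists u : seq A, size u = N /\ 0 < N /\
    forall i, W i = nth (W 0) u (i %% N).

Section Graph.
Variables (A : eqType) (V E : finType) (src tgt : E -> V) (Fw Bw : E -> seq A).

Definition indeg (v : V) : nat := #|[pred e | tgt e == v]|.
Definition outdeg (v : V) : nat := #|[pred e | src e == v]|.

Definition distributing (v : V) : bool := (indeg v == 1) && (1 < outdeg v).
Definition collecting (v : V) : bool := (1 < indeg v) && (outdeg v == 1).

Definition adj : rel V := fun v w => [exists e, (src e == v) && (tgt e == w)].

Definition graph_with_words : Prop :=
  (forall v w : V, connect adj v w) /\
  (forall v : V, distributing v || collecting v).

Definition is_path (s : seq E) : bool :=
  (s != [::]) && sorted (fun e f => tgt e == src f) s.

Definition symmetric_path (s : seq E) : bool :=
  match s with
  | [::] => false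
  | e :: s' => [&& is_path s, collecting (src e) & distributing (tgt (last e s'))]
  end.

Definition Fpath (s : seq E) : seq A :=
  match s with
  | [::] => [::]
  | e :: s' => Fw e ++ flatten [seq Fw x | x <- s' & distributing (src x)]
  end.

Definition Bpath (s : seq E) : seq A :=
  match s with
  | [::] => [::]
  | e :: s' => flatten [seq Bw x | x <- belast e s' & collecting (tgt x)]
               ++ Bw (last e s')
  end.

Definition support_edge (e : E) : bool := collecting (src e) && distributing (tgt e).

Definition distinct_first (w1 w2 : seq A) : Prop :=
  [/\ w1 != [::], w2 != [::] & ohead w1 != ohead w2].
Definition distinct_last (w1 w2 : seq A) : Prop :=
  distinct_first (rev w1) (rev w2).

Definition rauzy_scheme (W : nat -> A) : Prop :=
  graph_with_words /\
  (* (1) *) 1 < #|E| /\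
  (* (2) *) (forall e1 e2 : E, e1 != e2 -> src e1 = src e2 ->
               distributing (src e1) -> distinct_first (Fw e1) (Fw e2)) /\
            (forall e1 e2 : E, e1 != e2 -> tgt e1 = tgt e2 ->
               collecting (tgt e1) -> distinct_last (Bw e1) (Bw e2)) /\
  (* (3) *) (forall s, symmetric_path s -> Fpath s = Bpath s) /\
  (* (4) *) (forall s1 s2 k, symmetric_path s1 -> symmetric_path s2 -> 1 <= k ->
               occurs_k k (Fpath s1) (Fpath s2) -> occurs_k k s1 s2) /\
  (* (5) *) (forall e, factor_inf (Fw e) W /\ factor_inf (Bw e) W) /\
  (* (6) *) (forall u, factor_inf u W -> exists s, symmetric_path s /\ factor u (Fpath s)) /\
  (* (7) *) (forall e, exists u, factor_inf u W /\
               forall s, symmetric_path s -> factor u (Fpath s) -> e \in s).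

(* scale < N  <->  some support edge v has |F(v)| < N (the scale is the
   minimum of |F(v)| over support edges) *)
Definition scale_lt (N : nat) : Prop :=
  exists e, support_edge e /\ size (Fw e) < N.

End Graph.

(* Let W = u u u ... with |u| = N and suppose every support edge e of a Rauzy
   scheme for W has |F(e)| >= N.  Pick a support edge e (one exists on any
   symmetric path); its target is distributing, so it has two outgoing edges
   f1 <> f2, whose front words start with different letters by axiom (2).
   The key lemma support_successor_head shows that the front word of any edge
   f leaving tgt e starts with the letter of F(e) located N positions before
   its end, so F(f1) and F(f2) start with the same letter: contradiction.

   For the key lemma, axiom (7) gives a word u_f forcing f.  By periodicity,
   u_f has an occurrence in W padded by K letters on both sides (K bounding
   all edge words); axiom (6) reads this padded word along a symmetric path,
   and cutting that path at distributing/collecting vertices (localize, which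
   uses F = B on symmetric paths) yields a symmetric path t whose front word
   is a factor of W containing u_f.  Hence t goes through f, preceded by e,
   so F(e) F(f) is a factor of the N-periodic word W. *)

From mathcomp Require Import all_boot zify.
Set Implicit Arguments. Unset Strict Implicit. Unset Printing Implicit Defensive.

Section FiniteWords.
Variable T : eqType.

Lemma factorP (u w : seq T) : factor u w <-> exists L R, w = L ++ u ++ R.
Proof.
rewrite /factor /occ -has_count; split.
  case/hasP=> r _ /andP [_ /eqP Eu].
  exists (take r w), (drop (size u) (drop r w)).
  by rewrite -{1}Eu !cat_take_drop.
case=> L [R ->]; apply/hasP; exists (size L).
  by rewrite mem_iota !size_cat; lia.
by rewrite drop_size_cat // take_size_cat // !size_cat eqxx andbT; lia.
Qed.

Lemma factor_middle (L u R : seq T) : factor u (L ++ u ++ R).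
Proof. by apply/factorP; exists L, R. Qed.

End FiniteWords.

Lemma prefix_between (T : Type) (w z a b c : seq T) :
  w ++ z = a ++ b ++ c -> size a <= size w <= size a + size b ->
  exists b1 b2, b = b1 ++ b2 /\ w = a ++ b1.
Proof.
move=> E /andP [le_aw le_wab].
exists (take (size w - size a) b), (drop (size w - size a) b).
split; first by rewrite cat_take_drop.
have := congr1 (take (size w)) E; rewrite take_size_cat // take_cat ltnNge le_aw /=.
by rewrite takel_cat //; lia.
Qed.

Lemma suffix_between (T : Type) (z w a b c : seq T) :
  z ++ w = a ++ b ++ c -> size c <= size w <= size b + size c ->
  exists b1 b2, b = b1 ++ b2 /\ w = b2 ++ c.
Proof.
move=> /(congr1 rev); rewrite !rev_cat -catA => E bounds.
have /(prefix_between E) [b1 [b2 [Eb Ew]]] :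
  size (rev c) <= size (rev w) <= size (rev c) + size (rev b).
  by rewrite !size_rev addnC.
exists (rev b2), (rev b1); split.
  by rewrite -rev_cat -Eb revK.
by rewrite -[c]revK -rev_cat -Ew !revK.
Qed.

Section InfiniteWords.
Variables (A : eqType) (W : nat -> A).

Definition window (i n : nat) : seq A := [seq W k | k <- iota i n].

Lemma size_window i n : size (window i n) = n.
Proof. by rewrite size_map size_iota. Qed.

Lemma nth_window x0 i n k : k < n -> nth x0 (window i n) k = W (i + k).
Proof. by move=> lt_kn; rewrite (nth_map 0) ?size_iota // nth_iota. Qed.

Lemma window_factor i n : factor_inf (window i n) W.
Proof. by exists i => j; rewrite size_window => lt_j; rewrite nth_window. Qed.

Lemma factor_infE (u : seq A) :
  factor_inf u W <-> exists i, u = window i (size u).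
Proof.
split=> [[i Hu] | [i ->]]; last exact: window_factor.
exists i; apply: (eq_from_nth (x0 := W 0)); first by rewrite size_window.
by move=> j lt_j; rewrite nth_window // Hu.
Qed.

Lemma window_cat3 i a b c :
  a ++ b ++ c = window i (size a + size b + size c) ->
  b = window (i + size a) (size b).
Proof.
move=> /(congr1 (take (size b) \o drop (size a))) /=.
rewrite drop_size_cat // take_size_cat // => {1}->.
rewrite /window -map_drop -map_take drop_iota take_iota.
by congr (map W (iota _ _)); lia.
Qed.

Lemma factor_inf_infix a b c :
  factor_inf (a ++ b ++ c) W -> factor_inf b W.
Proof.
case/factor_infE=> i; rewrite !size_cat addnA => /window_cat3 Eb.
by apply/factor_infE; exists (i + size a).
Qed.

Section Periodic.
Variable N : nat.
Hypothesis W_periodic : forall m, W (m + N) = W m.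

Lemma window_shift_period i n k : window (i + k * N) n = window i n.
Proof.
apply: (eq_from_nth (x0 := W 0)) => [|j]; rewrite !size_window // => lt_jn.
rewrite !nth_window // addnAC; elim: k => [|k IHk]; first by rewrite addn0.
by rewrite mulSn addnCA addnC W_periodic.
Qed.

Hypothesis N_gt0 : 0 < N.

Lemma factor_inf_pad (u : seq A) K : factor_inf u W ->
  exists P S, [/\ size P = K, size S = K & factor_inf (P ++ u ++ S) W].
Proof.
case/factor_infE=> i Eu; set n := size u in Eu *; set b := i + K * N - K.
have Eb : b + K = i + K * N by rewrite /b subnK //; nia.
exists (window b K), (window (b + K + n) K); rewrite !size_window; split=> //.
have -> : u = window (b + K) n by rewrite Eb window_shift_period.
by rewrite /window -!map_cat -!iotaD; apply: window_factor.
Qed.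

(* Letters at distance N in a factor of W coincide: the letter following a
   factor a of length at least N is the letter of a located N steps earlier. *)
Lemma periodic_factor_head Y a b Z : factor_inf (Y ++ a ++ b ++ Z) W ->
  N <= size a -> b != [::] -> ohead b = Some (nth (W 0) a (size a - N)).
Proof.
move=> fac le_Na; case: b fac => // x b fac _ /=; congr Some.
have /factor_infE [i Eab] : factor_inf (a ++ x :: b) W.
  by apply: (@factor_inf_infix Y _ Z); rewrite -catA.
have nth_ab k : k < size (a ++ x :: b) -> nth (W 0) (a ++ x :: b) k = W (i + k).
  by move=> lt_k; rewrite {1}Eab nth_window.
have -> : x = nth (W 0) (a ++ x :: b) (size a) by rewrite nth_cat ltnn subnn.
have -> : nth (W 0) a (size a - N) = nth (W 0) (a ++ x :: b) (size a - N).
  by rewrite nth_cat ifT //; lia.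
rewrite !nth_ab ?size_cat /=; try lia.
by have -> : i + size a = i + (size a - N) + N by lia; rewrite W_periodic.
Qed.
End Periodic.
End InfiniteWords.

Section Paths.
Variables (A : eqType) (V E : finType) (src tgt : E -> V) (Fw Bw : E -> seq A).

Local Notation dist := (distributing src tgt).
Local Notation coll := (collecting src tgt).
Local Notation symmetric := (symmetric_path src tgt).
Local Notation F := (Fpath src tgt Fw).
Local Notation B := (Bpath src tgt Bw).
Local Notation linked := (fun e f : E => tgt e == src f).

Lemma Fpath_cat p t : p != [::] ->
  F (p ++ t) = F p ++ flatten [seq Fw x | x <- t & dist (src x)].
Proof. by case: p => [|x p] //= _; rewrite filter_cat map_cat flatten_cat catA. Qed.

Lemma Bpath_cat p t : t != [::] ->
  B (p ++ t) = flatten [seq Bw x | x <- p & coll (tgt x)] ++ B t.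
Proof.
case: t => [|y t] // _; case: p => [|x p] //=.
rewrite belast_cat /= last_cat /= -cat_rcons -lastI.
by rewrite filter_cat map_cat flatten_cat catA.
Qed.

Lemma Fpath_rcons (p : seq E) g : p != [::] ->
  F (rcons p g) = F p ++ (if dist (src g) then Fw g else [::]).
Proof.
by move=> p0; rewrite -cats1 Fpath_cat //=; case: ifP => _ /=; rewrite ?cats0.
Qed.

Lemma Bpath_cons g (t : seq E) : t != [::] ->
  B (g :: t) = (if coll (tgt g) then Bw g else [::]) ++ B t.
Proof.
by move=> t0; rewrite -cat1s Bpath_cat //=; case: ifP => _ /=; rewrite ?cats0.
Qed.

Lemma symmetric_sorted s : symmetric s -> sorted linked s.
Proof. by case: s => // e s /and3P [/andP [_ sorted_s] _ _]. Qed.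

Lemma symmetric_prefix p g t :
  symmetric (rcons p g ++ t) -> dist (tgt g) -> symmetric (rcons p g).
Proof.
case: p => [|h p] /=.
  by case/and3P=> _ coll_g _ dist_g; rewrite /is_path /= coll_g dist_g.
case/and3P=> /andP [_ sorted_s] coll_h _ dist_g.
rewrite /is_path /= coll_h last_rcons dist_g !andbT.
by move: sorted_s; rewrite -cat_cons => /cat_sorted2 [].
Qed.

Lemma symmetric_suffix p g t :
  symmetric (p ++ g :: t) -> coll (src g) -> symmetric (g :: t).
Proof.
case: p => [|h p] //= /and3P [/andP [_ sorted_s] _ dist_last] coll_g.
rewrite /is_path /= coll_g; move: dist_last; rewrite last_cat /= => ->; rewrite andbT.
by move: sorted_s; rewrite -cat_cons => /cat_sorted2 [].
Qed.

Hypothesis F_eq_B : forall s, symmetric s -> F s = B s.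

Section BoundedWords.
Variable K : nat.
Hypothesis Fw_bounded : forall e, size (Fw e) <= K.
Hypothesis Bw_bounded : forall e, size (Bw e) <= K.

(* Discrete intermediate value property: the front words of the prefixes of a
   path that end at distributing vertices grow by steps of at most K letters. *)
Lemma prefix_cut s n : sorted linked s -> n + K < size (F s) ->
  exists p g t, [/\ s = rcons p g ++ t, dist (tgt g) &
    n <= size (F (rcons p g)) <= n + K].
Proof.
elim/last_ind: s => [|s g IH] // sorted_sg big.
case: s IH sorted_sg big => [|x s] IH sorted_sg big.
  by move: big; rewrite /= cats0; have := Fw_bounded g; lia.
move: sorted_sg; rewrite [sorted _ _]/= rcons_path => /andP [sorted_s /eqP link].
have extend p g' t :
  x :: s = rcons p g' ++ t -> rcons (x :: s) g = rcons p g' ++ rcons t g.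
  by rewrite -rcons_cat => ->.
move: big; rewrite Fpath_rcons //; case dist_g: (dist (src g)); rewrite ?cats0 => big.
  case: (ltnP (n + K) (size (F (x :: s)))) => [/(IH sorted_s) | small].
    by case=> p [g' [t [/extend Es ? ?]]]; exists p, g', (rcons t g).
  exists (belast x s), (last x s), [:: g]; rewrite -lastI cats1 link dist_g.
  by split=> //; move: big; rewrite size_cat; have := Fw_bounded g; lia.
by have [p [g' [t [/extend Es ? ?]]]] := IH sorted_s big; exists p, g', (rcons t g).
Qed.

Lemma suffix_cut s n : sorted linked s -> n + K < size (B s) ->
  exists p g t, [/\ s = p ++ g :: t, coll (src g) &
    n <= size (B (g :: t)) <= n + K].
Proof.
elim: s => [|g s IH] // sorted_gs big.
case: s IH sorted_gs big => [|y s] IH sorted_gs big.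
  by move: big; have := Bw_bounded g; rewrite /=; lia.
case/andP: sorted_gs => /eqP link sorted_s.
move: big; rewrite Bpath_cons //; case coll_g: (coll (tgt g)) => big.
  case: (ltnP (n + K) (size (B (y :: s)))) => [/(IH sorted_s) | small].
    by case=> p [g' [t [Es ? ?]]]; exists (g :: p), g', t; rewrite Es.
  exists [:: g], y, s; rewrite -link coll_g.
  by split=> //; move: big; rewrite size_cat; have := Bw_bounded g; lia.
by have [p [g' [t [Es ? ?]]]] := IH sorted_s big; exists (g :: p), g', t; rewrite Es.
Qed.

Lemma symmetric_prefix_cut s n : symmetric s -> n <= size (F s) ->
  exists p t, [/\ s = p ++ t, symmetric p & n <= size (F p) <= n + K].
Proof.
move=> sym_s le_n; case: (leqP (size (F s)) (n + K)) => [small | big].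
  by exists s, [::]; rewrite cats0 le_n small.
have [p [g [t [Es dist_g bounds]]]] := prefix_cut (symmetric_sorted sym_s) big.
exists (rcons p g), t; split=> //.
by rewrite Es in sym_s; apply: symmetric_prefix sym_s dist_g.
Qed.

Lemma symmetric_suffix_cut s n : symmetric s -> n <= size (B s) ->
  exists p t, [/\ s = p ++ t, symmetric t & n <= size (B t) <= n + K].
Proof.
move=> sym_s le_n; case: (leqP (size (B s)) (n + K)) => [small | big].
  by exists [::], s; rewrite le_n small.
have [p [g [t [Es coll_g bounds]]]] := suffix_cut (symmetric_sorted sym_s) big.
exists p, (g :: t); split=> //.
by rewrite Es in sym_s; apply: symmetric_suffix sym_s coll_g.
Qed.

Lemma localize s L P u S R : symmetric s -> F s = L ++ P ++ u ++ S ++ R ->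
  K <= size P -> K <= size S ->
  exists t P1 P2 S1 S2,
    [/\ symmetric t, P = P1 ++ P2, S = S1 ++ S2 & F t = P2 ++ u ++ S1].
Proof.
move=> sym_s EFs le_KP le_KS.
have [|p [z [Es sym_p bounds_p]]] :=
  symmetric_prefix_cut (n := size (L ++ P ++ u)) sym_s.
  by rewrite EFs !size_cat; lia.
have p0 : p != [::] by case: p sym_p {Es bounds_p}.
have [S1 [S2 [ES EFp]]] : exists S1 S2, S = S1 ++ S2 /\ F p = (L ++ P ++ u) ++ S1.
  apply: (@prefix_between _ _ (flatten [seq Fw x | x <- z & dist (src x)])).
    by rewrite -Fpath_cat // -Es EFs -!catA.
  by move: bounds_p; lia.
have [|p1 [t [Ep sym_t bounds_t]]] := symmetric_suffix_cut (n := size (u ++ S1)) sym_p.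
  by rewrite -F_eq_B // EFp !size_cat; lia.
have t0 : t != [::] by case: t sym_t {Ep bounds_t}.
have [P1 [P2 [EP EBt]]] : exists P1 P2, P = P1 ++ P2 /\ B t = P2 ++ u ++ S1.
  apply: (@suffix_between _ (flatten [seq Bw x | x <- p1 & coll (tgt x)]) _ L).
    by rewrite -Bpath_cat // -Ep -F_eq_B // EFp -!catA.
  by move: bounds_t; rewrite !size_cat; lia.
by exists t, P1, P2, S1, S2; rewrite F_eq_B.
Qed.

End BoundedWords.

Lemma edge_words_bounded :
  exists K, (forall e, size (Fw e) <= K) /\ (forall e, size (Bw e) <= K).
Proof.
exists (\max_(e : E) (size (Fw e) + size (Bw e))).
by split=> e; apply: leq_trans (leq_bigmax e); rewrite ?leq_addr ?leq_addl.
Qed.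

Lemma dist_not_coll v : dist v -> coll v -> False.
Proof. by case/andP=> /eqP in1 _ /andP [in_gt1 _]; rewrite in1 in in_gt1. Qed.

Lemma dist_in_edge_unique v g e : dist v -> tgt g = v -> tgt e = v -> g = e.
Proof.
case/andP=> /eqP in1 _ tg te; have [x in_x] := mem_card1 in1.
by have := in_x g; have := in_x e; rewrite !inE tg te eqxx => /esym/eqP -> /esym/eqP.
Qed.

(* A support edge on its own is a symmetric path, so its two words agree. *)
Lemma support_Bw e : support_edge src tgt e -> Bw e = Fw e.
Proof.
case/andP=> coll_e dist_e; have := F_eq_B (s := [:: e]); rewrite /= cats0 => -> //.
by rewrite /symmetric_path /is_path /= coll_e dist_e.
Qed.

Lemma Fpath_through t e f : symmetric t -> f \in t ->
  support_edge src tgt e -> src f = tgt e ->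
  exists Y Z, F t = Y ++ Fw e ++ Fw f ++ Z.
Proof.
move=> sym_t f_t sup_e link; have /andP [_ dist_e] := sup_e.
case/splitPr: f_t sym_t => p1 p2; case/lastP: p1 => [|p g] sym_t.
  by case/and3P: sym_t => _; rewrite link => /(dist_not_coll dist_e).
have link_gf : tgt g = src f.
  move: (symmetric_sorted sym_t); rewrite -cats1 -catA /=.
  by case/cat_sorted2=> _ /= /andP [/eqP].
have Ege : g = e by apply: (dist_in_edge_unique dist_e); rewrite ?link_gf.
subst g.
have sym_pe : symmetric (rcons p e) by apply: symmetric_prefix sym_t dist_e.
exists (flatten [seq Bw x | x <- p & coll (tgt x)]).
exists (flatten [seq Fw x | x <- p2 & dist (src x)]).
rewrite Fpath_cat; last by rewrite -size_eq0 size_rcons.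
rewrite F_eq_B // -cats1 Bpath_cat //= link dist_e support_Bw //.
by rewrite -!catA.
Qed.

(* Every vertex is distributing or collecting; hence along a symmetric path
   the first edge ending at a distributing vertex is a support edge. *)
Lemma support_edge_exists s : (forall v, dist v || coll v) ->
  symmetric s -> exists e, support_edge src tgt e.
Proof.
move=> dichotomy; case: s => [|g s] // /and3P [/andP [_ path_s] coll_g dist_last].
elim: s g path_s coll_g dist_last => [|h s IH] g /= path_s coll_g dist_last.
  by exists g; apply/andP.
case dist_g: (dist (tgt g)); first by exists g; apply/andP.
case/andP: path_s => /eqP link path_s; apply: (IH h) => //.
by have := dichotomy (tgt g); rewrite dist_g link.
Qed.

Section PeriodicWord.
Variables (W : nat -> A) (N : nat).
Hypothesis N_gt0 : 0 < N.
Hypothesis W_periodic : forall m, W (m + N) = W m.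
Hypothesis factors_covered :
  forall u, factor_inf u W -> exists s, symmetric s /\ factor u (F s).

(* Indeed, a long enough periodic context
   around the word u_f localizes to a symmetric path through f whose front word
   is a factor of W and contains F(e) F(f). *)
Lemma support_successor_head e f :
  support_edge src tgt e -> N <= size (Fw e) -> src f = tgt e -> Fw f != [::] ->
  (exists u, factor_inf u W /\ forall s, symmetric s -> factor u (F s) -> f \in s) ->
  ohead (Fw f) = Some (nth (W 0) (Fw e) (size (Fw e) - N)).
Proof.
move=> sup_e le_N link f0 [u [u_fac u_forces_f]].
have [K [Fw_bounded Bw_bounded]] := edge_words_bounded.
have [P [S [sizeP sizeS x_fac]]] := factor_inf_pad W_periodic N_gt0 K u_fac.
have [s [sym_s /factorP [L [R]]]] := factors_covered x_fac; rewrite -!catA => EFs.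
have [t [P1 [P2 [S1 [S2 [sym_t EP ES EFt]]]]]] :=
  localize Fw_bounded Bw_bounded sym_s EFs (eq_leq (esym sizeP)) (eq_leq (esym sizeS)).
have u_t : factor u (F t) by rewrite EFt; apply: factor_middle.
have f_t := u_forces_f t sym_t u_t.
have [Y [Z EFt_e]] := Fpath_through sym_t f_t sup_e link.
apply: (periodic_factor_head W_periodic N_gt0 (Y := Y) (Z := Z)) => //.
rewrite -EFt_e EFt; apply: (factor_inf_infix (a := P1) (c := S2)).
by rewrite -!catA; rewrite EP ES -!catA in x_fac.
Qed.

End PeriodicWord.

End Paths.

Theorem corollary6p9 (A : eqType) (W : nat -> A) (N : nat)
  (V E : finType) (src tgt : E -> V) (Fw Bw : E -> seq A) :
  periodic_with_period W N ->
  rauzy_scheme src tgt Fw Bw W ->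
  scale_lt src tgt Fw N.
Proof.
move=> [period [_ [N_gt0 W_def]]].
move=> [[_ dichotomy] [_ [first_letters [_ [F_eq_B [_ [_ [covered forcing]]]]]]]].
have W_periodic m : W (m + N) = W m by rewrite W_def (W_def m) modnDr.
case: (boolP [exists e, support_edge src tgt e && (size (Fw e) < N)]).
  by case/existsP=> e /andP [sup_e short_e]; exists e.
move/existsPn=> long; exfalso.
have [s [sym_s _]] := covered _ (window_factor W 0 0).
have [e sup_e] := support_edge_exists dichotomy sym_s.
have le_N : N <= size (Fw e) by rewrite leqNgt; have := long e; rewrite sup_e.
have /andP [_ dist_e] := sup_e; have /andP [_ out_gt1] := dist_e.
have [f1 [f2 [f1_out f2_out f12]]] := card_gt1P out_gt1.
rewrite !inE in f1_out f2_out; move/eqP: f1_out => src_f1; move/eqP: f2_out => src_f2.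
have same_src : src f1 = src f2 by rewrite src_f1 src_f2.
have dist_f1 : distributing src tgt (src f1) by rewrite src_f1.
have [f1_0 f2_0 heads] := first_letters f1 f2 f12 same_src dist_f1.
have head f :=
  support_successor_head F_eq_B N_gt0 W_periodic covered sup_e le_N (f := f).
move: heads; rewrite (head f1 src_f1 f1_0 (forcing f1)).
by rewrite (head f2 src_f2 f2_0 (forcing f2)) eqxx.
Qed.
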